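(* Let $0<|q|<1$, let $m$ be a nonnegative integer, and let $a,b,c,d$ be complex numbers such that all denominators below are nonzero and $|cq^{-m}/(ab)|<1$. Then \[ {}_3\phi_2\!\left[\begin{matrix}a,b,dq^m\\ c,d\end{matrix};q,\frac{cq^{-m}}{ab}\right]= \frac{(c/a;q)_\infty(c/b;q)_\infty}{(c;q)_\infty(c/ab;q)_\infty}\, {}_3\phi_2\!\left[\begin{matrix}a,b,q^{-m}\\ abq/c,d\end{matrix};q,q\right]. \]
   Context: For $0<|q|<1$: $(a;q)_\infty=\prod_{j\ge0}(1-aq^j)$ and $(a;q)_k=(a;q)_\infty/(aq^k;q)_\infty$ for integers $k$. The basic hypergeometric series is ${}_r\phi_{r-1}\!\left[\begin{matrix}a_1,\dots,a_r\\ b_1,\dots,b_{r-1}\end{matrix};q,z\right]=\sum_{k\ge0}\frac{(a_1;q)_k\cdots(a_r;q)_k}{(q;q)_k(b_1;q)_k\cdots(b_{r-1};q)_k}z^k$ (it terminates if some numerator parameter equals $q^{-n}$, $n$ a nonnegative integer). *)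

From Stdlib Require Import Reals.
From Coquelicot Require Export Coquelicot Complex.
Open Scope C_scope.

Fixpoint qpoch (a q : C) (k : nat) : C :=
  match k with
  | O => 1
  | S k' => qpoch a q k' * (1 - a * pow_n q k')
  end.

Definition is_qpoch_inf (a q P : C) : Prop :=
  filterlim (fun n : nat => qpoch a q n) eventually (locally P).

Definition phi32_term (a1 a2 a3 b1 b2 q z : C) (k : nat) : C :=
  (qpoch a1 q k * qpoch a2 q k * qpoch a3 q k)
  / (qpoch q q k * qpoch b1 q k * qpoch b2 q k) * pow_n z k.

(* With x = q^k, the q-Chu–Vandermonde sum writes (dq^m;q)_k/(d;q)_k = (dq^k;q)_m/(d;q)_m as a
   sum over j <= m of (q^-m;q)_j q^j / ((q;q)_j (d;q)_j) times q^(km) (q^-k;q)_j.  Exchanging this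
   finite sum with the series in k, the j-th inner series vanishes for k < j and, after the shift
   k -> k + j, is the 2phi1 with parameters a q^j, b q^j; c q^j at its q-Gauss point
   c q^-j/(ab), which stays in the unit disc because j <= m.  Summing it by q-Gauss and rewriting
   (c q^-j/(ab);q)_j by reflection yields exactly the infinite-product prefactor times the j-th term
   of the terminating 3phi2.  The q-Gauss sum itself comes from iterating the contiguous relation
   c -> cq: the sum for c equals the n-th partial product ratio times the sum for c q^n, and the
   latter is 1 + O(|q|^n). *)

From Stdlib Require Import Reals Lra Lia.
From Coquelicot Require Import Coquelicot Complex.
Open Scope C_scope.

Lemma C1_neq_0 : RtoC 1 <> 0.
Proof. intros E. injection E. lra. Qed.

Lemma Cinv_neq0 (z : C) : z <> 0 -> / z <> 0.
Proof. intros Hz E. apply C1_neq_0. rewrite <- (Cinv_r z Hz), E. ring. Qed.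

Lemma one_minus_neq0 (x : C) : (Cmod x < 1)%R -> 1 - x <> 0.
Proof.
  intros H E. replace x with (RtoC 1) in H by (replace x with (1 - (1 - x)) by ring; rewrite E; ring).
  rewrite Cmod_1 in H. lra.
Qed.

Lemma sub_neq0_of_one_minus_div (x y : C) : y <> 0 -> 1 - x / y <> 0 -> y - x <> 0.
Proof.
  intros Hy H E. apply H. replace x with y by (replace x with (y - (y - x)) by ring; rewrite E; ring).
  field. exact Hy.
Qed.

Lemma pow_le_1 (r : R) (n : nat) : (0 <= r <= 1)%R -> (0 <= r ^ n <= 1)%R.
Proof. intros H. split; [now apply pow_le|]. rewrite <- (pow1 n). now apply pow_incr. Qed.

Lemma Cmod_triangle_inv (x y : C) : (Cmod x - Cmod y <= Cmod (x - y))%R.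
Proof. assert (H := Cmod_triangle (x - y) y). replace (x - y + y) with x in H by ring. lra. Qed.

(** * Limits and series of complex sequences *)

Definition is_lim_Cseq (u : nat -> C) (L : C) : Prop :=
  is_lim_seq (fun n => Cmod (u n - L)) 0%R.

Lemma is_lim_Cseq_filterlim (u : nat -> C) (L : C) :
  is_lim_Cseq u L <-> filterlim u eventually (locally L).
Proof.
  assert (Hk := @norm_factor_gt_0 C_AbsRing C_NormedModule).
  unfold is_lim_Cseq. rewrite <- is_lim_seq_spec, filterlim_locally. split.
  - intros H eps. destruct (H eps) as [N HN]. exists N. intros n Hn.
    apply (@norm_compat1 C_AbsRing C_NormedModule).
    specialize (HN n Hn). rewrite Rminus_0_r, Rabs_pos_eq in HN by apply Cmod_ge_0. exact HN.
  - intros H eps.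
    assert (He : (0 < eps / norm_factor)%R) by (apply Rdiv_lt_0_compat; [apply cond_pos | exact Hk]).
    destruct (H (mkposreal _ He)) as [N HN]. exists N. intros n Hn.
    specialize (HN n Hn). apply (@norm_compat2 C_AbsRing C_NormedModule) in HN.
    rewrite Rminus_0_r, Rabs_pos_eq by apply Cmod_ge_0.
    change (Cmod (u n - L)) with (norm (minus (u n) L)).
    eapply Rlt_le_trans; [exact HN|]. simpl. right. field. now apply Rgt_not_eq.
Qed.

Lemma is_lim_Cseq_ext (u v : nat -> C) (L : C) :
  (forall n, u n = v n) -> is_lim_Cseq u L -> is_lim_Cseq v L.
Proof. intros E. apply is_lim_seq_ext. intros n. now rewrite E. Qed.

Lemma is_lim_Cseq_squeeze (u : nat -> C) (L : C) (e : nat -> R) :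
  eventually (fun n => Cmod (u n - L) <= e n)%R -> is_lim_seq e 0%R -> is_lim_Cseq u L.
Proof.
  intros H He. apply is_lim_seq_le_le_loc with (fun _ => 0%R) e; [|apply is_lim_seq_const|exact He].
  destruct H as [N HN]. exists N. intros n Hn. split; [apply Cmod_ge_0 | now apply HN].
Qed.

Lemma is_lim_Cseq_const (L : C) : is_lim_Cseq (fun _ => L) L.
Proof.
  apply is_lim_Cseq_squeeze with (fun _ => 0%R); [|apply is_lim_seq_const].
  exists O. intros n _. replace (L - L) with (RtoC 0) by ring. rewrite Cmod_0. lra.
Qed.

Lemma is_lim_Cseq_plus (u v : nat -> C) (L M : C) :
  is_lim_Cseq u L -> is_lim_Cseq v M -> is_lim_Cseq (fun n => u n + v n) (L + M).
Proof.
  intros Hu Hv. apply is_lim_Cseq_squeeze with (fun n => Cmod (u n - L) + Cmod (v n - M))%R.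
  - exists O. intros n _.
    replace (u n + v n - (L + M)) with ((u n - L) + (v n - M)) by ring. apply Cmod_triangle.
  - replace 0%R with (0 + 0)%R by ring. now apply is_lim_seq_plus'.
Qed.

Lemma is_lim_Cseq_mult (u v : nat -> C) (L M : C) :
  is_lim_Cseq u L -> is_lim_Cseq v M -> is_lim_Cseq (fun n => u n * v n) (L * M).
Proof.
  intros Hu Hv. apply is_lim_Cseq_squeeze with
    (fun n => Cmod (u n - L) * Cmod (v n - M) + Cmod L * Cmod (v n - M) + Cmod M * Cmod (u n - L))%R.
  - exists O. intros n _.
    replace (u n * v n - L * M) with ((u n - L) * (v n - M) + L * (v n - M) + M * (u n - L)) by ring.
    eapply Rle_trans; [apply Cmod_triangle|]. rewrite !Cmod_mult.
    apply Rplus_le_compat_r. eapply Rle_trans; [apply Cmod_triangle|]. rewrite !Cmod_mult. lra.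
  - replace 0%R with (0 * 0 + Cmod L * 0 + Cmod M * 0)%R by ring.
    apply is_lim_seq_plus'; [apply is_lim_seq_plus'|]; try apply is_lim_seq_mult'; auto;
      apply is_lim_seq_const.
Qed.

Lemma is_lim_Cseq_inv (u : nat -> C) (L : C) :
  L <> 0 -> (forall n, u n <> 0) -> is_lim_Cseq u L -> is_lim_Cseq (fun n => / u n) (/ L).
Proof.
  intros HL Hu H. assert (HL0 : (0 < Cmod L)%R) by now apply Cmod_gt_0.
  apply is_lim_Cseq_squeeze with (fun n => 2 / (Cmod L * Cmod L) * Cmod (u n - L))%R.
  - (* once [|u n| >= |L|/2], we have [|1/u n - 1/L| <= 2 |u n - L| / |L|^2] *)
    apply is_lim_seq_spec in H. assert (He : (0 < Cmod L / 2)%R) by lra.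
    destruct (H (mkposreal _ He)) as [N HN]. exists N. intros n Hn. specialize (HN n Hn). simpl in HN.
    rewrite Rminus_0_r, Rabs_pos_eq in HN by apply Cmod_ge_0.
    assert (Hun : (Cmod L / 2 <= Cmod (u n))%R).
    { assert (T := Cmod_triangle_inv L (u n)).
      replace (L - u n) with (- (u n - L)) in T by ring. rewrite Cmod_opp in T. lra. }
    replace (/ u n - / L) with (- (u n - L) / (u n * L)) by (field; auto).
    rewrite Cmod_div by (apply Cmult_neq_0; auto). rewrite Cmod_opp, Cmod_mult.
    unfold Rdiv. rewrite Rmult_comm. apply Rmult_le_compat_r; [apply Cmod_ge_0|].
    apply Rle_trans with (/ (Cmod L / 2 * Cmod L))%R.
    + apply Rinv_le_contravar; [apply Rmult_lt_0_compat; lra | apply Rmult_le_compat_r; lra].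
    + right. field. lra.
  - replace 0%R with (2 / (Cmod L * Cmod L) * 0)%R by ring.
    apply is_lim_seq_mult'; [apply is_lim_seq_const | exact H].
Qed.

Lemma is_lim_Cseq_unique (u : nat -> C) (L M : C) :
  is_lim_Cseq u L -> is_lim_Cseq u M -> L = M.
Proof.
  intros HL HM.
  assert (T : Rbar_le (Cmod (L - M)) (0 + 0)%R).
  { apply is_lim_seq_le with (fun _ => Cmod (L - M)) (fun n => Cmod (u n - L) + Cmod (u n - M))%R.
    - intros n. replace (L - M) with (- (u n - L) + (u n - M)) by ring.
      eapply Rle_trans; [apply Cmod_triangle|]. rewrite Cmod_opp. lra.
    - apply is_lim_seq_const.
    - now apply is_lim_seq_plus'. }
  simpl in T. assert (E : Cmod (L - M) = 0%R) by (generalize (Cmod_ge_0 (L - M)); lra).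
  apply Cmod_eq_0 in E. replace M with (L - (L - M)) by ring. rewrite E. ring.
Qed.

Lemma is_lim_Cseq_incr_n (u : nat -> C) (L : C) (j : nat) :
  is_lim_Cseq (fun n => u (n + j)%nat) L <-> is_lim_Cseq u L.
Proof. unfold is_lim_Cseq. symmetry. apply (is_lim_seq_incr_n (fun n => Cmod (u n - L))). Qed.

Lemma is_lim_Cseq_Cmod_0 (u : nat -> C) :
  is_lim_seq (fun n => Cmod (u n)) 0%R -> is_lim_Cseq u 0.
Proof. apply is_lim_seq_ext. intros n. f_equal. ring. Qed.

Fixpoint psum (f : nat -> C) (n : nat) : C :=
  match n with O => 0 | S n => psum f n + f n end.

Definition is_Cseries (f : nat -> C) (L : C) : Prop := is_lim_Cseq (psum f) L.

Lemma sum_n_psum (f : nat -> C) (n : nat) : sum_n f n = psum f (S n).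
Proof.
  induction n as [|n IH]; [rewrite sum_O; simpl; ring|].
  rewrite sum_Sn, IH. reflexivity.
Qed.

Lemma is_Cseries_is_series (f : nat -> C) (L : C) : is_Cseries f L <-> is_series f L.
Proof.
  unfold is_Cseries, is_series. rewrite <- is_lim_Cseq_filterlim, <- (is_lim_Cseq_incr_n _ _ 1).
  split; apply is_lim_Cseq_ext; intros n; rewrite sum_n_psum, Nat.add_1_r; reflexivity.
Qed.

Lemma psum_ext (f g : nat -> C) (n : nat) :
  (forall k, (k < n)%nat -> f k = g k) -> psum f n = psum g n.
Proof.
  induction n as [|n IH]; intros H; simpl; [reflexivity|].
  rewrite IH, H by (auto || intros; apply H; lia). reflexivity.
Qed.

Lemma psum_S_n (f : nat -> C) (n : nat) : psum f (S n) = psum f n + f n.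
Proof. reflexivity. Qed.

Lemma psum_mult_r (f : nat -> C) (c : C) (n : nat) :
  psum (fun j => f j * c) n = psum f n * c.
Proof. induction n as [|n IH]; simpl; [ring|]. rewrite IH. ring. Qed.

Lemma psum_mult_l (f : nat -> C) (c : C) (n : nat) :
  psum (fun j => c * f j) n = c * psum f n.
Proof. induction n as [|n IH]; simpl; [ring|]. rewrite IH. ring. Qed.

Lemma psum_eq0 (f : nat -> C) (n : nat) : (forall k, (k < n)%nat -> f k = 0) -> psum f n = 0.
Proof.
  induction n as [|n IH]; intros H; simpl; [reflexivity|].
  rewrite IH, H by (lia || intros; apply H; lia). ring.
Qed.

Lemma is_Cseries_ext (f g : nat -> C) (L : C) :
  (forall k, f k = g k) -> is_Cseries f L -> is_Cseries g L.
Proof. intros E. apply is_lim_Cseq_ext. intros n. apply psum_ext. auto. Qed.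

Lemma is_Cseries_plus (f g : nat -> C) (L M : C) :
  is_Cseries f L -> is_Cseries g M -> is_Cseries (fun k => f k + g k) (L + M).
Proof.
  intros Hf Hg. eapply is_lim_Cseq_ext; [|exact (is_lim_Cseq_plus _ _ _ _ Hf Hg)].
  intros n. induction n as [|n IH]; simpl; [ring|]. rewrite <- IH. ring.
Qed.

Lemma is_Cseries_scal (f : nat -> C) (L c : C) :
  is_Cseries f L -> is_Cseries (fun k => c * f k) (c * L).
Proof.
  intros Hf. eapply is_lim_Cseq_ext; [|exact (is_lim_Cseq_mult _ _ _ _ (is_lim_Cseq_const c) Hf)].
  intros n. symmetry. apply psum_mult_l.
Qed.

Lemma is_Cseries_unique (f : nat -> C) (L M : C) : is_Cseries f L -> is_Cseries f M -> L = M.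
Proof. apply is_lim_Cseq_unique. Qed.

Lemma is_Cseries_finite (f : nat -> C) (N : nat) :
  (forall k, (N <= k)%nat -> f k = 0) -> is_Cseries f (psum f N).
Proof.
  intros H. apply (is_lim_Cseq_incr_n _ _ N).
  eapply is_lim_Cseq_ext; [|apply is_lim_Cseq_const]. intros n.
  induction n as [|n IH]; [reflexivity|]. simpl. rewrite <- IH, H by lia. ring.
Qed.

Lemma is_Cseries_incr_n (f g : nat -> C) (j : nat) (L : C) :
  (forall k, (k < j)%nat -> g k = 0) -> (forall l, g (l + j)%nat = f l) ->
  is_Cseries f L -> is_Cseries g L.
Proof.
  intros H0 Hj Hf. apply (is_lim_Cseq_incr_n _ _ j).
  eapply is_lim_Cseq_ext; [|exact Hf]. intros n.
  induction n as [|n IH]; simpl; [symmetry; now apply psum_eq0|]. now rewrite IH, Hj.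
Qed.

Lemma is_Cseries_psum (F : nat -> nat -> C) (V : nat -> C) (n : nat) :
  (forall j, (j < n)%nat -> is_Cseries (F j) (V j)) ->
  is_Cseries (fun k => psum (fun j => F j k) n) (psum V n).
Proof.
  induction n as [|n IH]; intros H; simpl.
  - eapply is_Cseries_ext; [|apply (is_Cseries_finite (fun _ => 0) 0)]; reflexivity.
  - apply is_Cseries_plus; [apply IH; intros; apply H|apply H]; lia.
Qed.

Lemma is_Cseries_telescope (D : nat -> C) :
  is_lim_Cseq D 0 -> is_Cseries (fun l => D l - D (S l)) (D O).
Proof.
  intros H. assert (H' := is_lim_Cseq_plus _ _ _ _ (is_lim_Cseq_const (D O))
    (is_lim_Cseq_mult _ _ _ _ (is_lim_Cseq_const (-1)) H)).
  replace (D O + -1 * 0) with (D O) in H' by ring.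
  eapply is_lim_Cseq_ext; [|exact H']. intros n.
  induction n as [|n IH]; simpl in *; [ring|]. rewrite <- IH. ring.
Qed.

Lemma ex_Cseries_Cmod (f : nat -> C) :
  ex_series (fun n => Cmod (f n)) -> exists L, is_Cseries f L.
Proof.
  intros H. assert (E : ex_series (V := C_CompleteNormedModule) f).
  { apply ex_series_le with (fun n => Cmod (f n)); [|exact H]. intros n. now right. }
  destruct E as [L HL]. exists L. now apply is_Cseries_is_series.
Qed.

Lemma is_lim_Cseq_term_0 (f : nat -> C) : ex_series (fun n => Cmod (f n)) -> is_lim_Cseq f 0.
Proof. intros H. apply is_lim_Cseq_Cmod_0. now apply ex_series_lim_0. Qed.

Lemma ex_series_Cmod_geom (f : nat -> C) (rho : R) (N : nat) :
  (0 <= rho < 1)%R -> (forall l, (N <= l)%nat -> (Cmod (f (S l)) <= rho * Cmod (f l))%R) ->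
  ex_series (fun n => Cmod (f n)).
Proof.
  intros Hr H. apply (ex_series_incr_n _ N).
  apply (@ex_series_le R_AbsRing R_CompleteNormedModule) with (fun k => Cmod (f N) * rho ^ k)%R.
  - intros k. change (norm ?x) with (Rabs x). rewrite Rabs_pos_eq by apply Cmod_ge_0.
    induction k as [|k IH]; [rewrite Nat.add_0_r; simpl; lra|].
    rewrite Nat.add_succ_r. eapply Rle_trans; [apply H; lia|]. simpl.
    assert (0 <= Cmod (f N))%R by apply Cmod_ge_0. nra.
  - exists (Cmod (f N) * / (1 - rho))%R. apply (@is_series_scal_l R_AbsRing R_NormedModule).
    apply is_series_geom. rewrite Rabs_pos_eq; lra.
Qed.

Lemma ex_series_Cmod_ratio (f r : nat -> C) (z : C) :
  (Cmod z < 1)%R -> is_lim_Cseq r z -> (forall l, f (S l) = r l * f l) ->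
  ex_series (fun n => Cmod (f n)).
Proof.
  intros Hz Hr Hf. assert (He : (0 < (1 - Cmod z) / 2)%R) by lra.
  apply is_lim_seq_spec in Hr. destruct (Hr (mkposreal _ He)) as [N HN].
  apply ex_series_Cmod_geom with ((1 + Cmod z) / 2)%R N; [generalize (Cmod_ge_0 z); lra|].
  intros l Hl. rewrite Hf, Cmod_mult. apply Rmult_le_compat_r; [apply Cmod_ge_0|].
  specialize (HN l Hl). simpl in HN. rewrite Rminus_0_r, Rabs_pos_eq in HN by apply Cmod_ge_0.
  assert (T := Cmod_triangle (r l - z) z). replace (r l - z + z) with (r l) in T by ring. lra.
Qed.

Lemma is_lim_Cseq_Cmod (u : nat -> C) (L : C) :
  is_lim_Cseq u L -> is_lim_seq (fun n => Cmod (u n)) (Cmod L).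
Proof.
  intros H. apply is_lim_seq_le_le with (fun n => Cmod L - Cmod (u n - L))%R
    (fun n => Cmod L + Cmod (u n - L))%R.
  - intros n. assert (T1 := Cmod_triangle_inv (u n) L).
    assert (T2 := Cmod_triangle_inv L (u n)).
    replace (L - u n) with (- (u n - L)) in T2 by ring. rewrite Cmod_opp in T2. lra.
  - assert (T := is_lim_seq_minus' _ _ _ _ (is_lim_seq_const (Cmod L)) H).
    now rewrite Rminus_0_r in T.
  - assert (T := is_lim_seq_plus' _ _ _ _ (is_lim_seq_const (Cmod L)) H).
    now rewrite Rplus_0_r in T.
Qed.

Lemma is_Cseries_Cmod_le (f : nat -> C) (L : C) (b : nat -> R) (B : R) :
  is_Cseries f L -> (forall n, Cmod (f n) <= b n)%R -> is_series b B -> (Cmod L <= B)%R.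
Proof.
  intros Hf Hb HB.
  assert (Hp : forall n, (Cmod (psum f (S n)) <= sum_n b n)%R).
  { induction n as [|n IH]; [rewrite sum_O; simpl; rewrite Cplus_0_l; apply Hb|].
    rewrite sum_Sn. change (psum f (S (S n))) with (psum f (S n) + f (S n)).
    change (plus ?x ?y) with (x + y)%R.
    eapply Rle_trans; [apply Cmod_triangle|]. specialize (Hb (S n)). lra. }
  apply is_lim_Cseq_Cmod in Hf. apply (is_lim_seq_incr_n _ 1) in Hf.
  assert (T : Rbar_le (Cmod L) B).
  { apply is_lim_seq_le with (2 := Hf) (3 := HB). intros n. rewrite Nat.add_1_r. apply Hp. }
  exact T.
Qed.

(** * q-Pochhammer symbols *)

Lemma qpochS (x q : C) (k : nat) : qpoch x q (S k) = qpoch x q k * (1 - x * q ^ k).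
Proof. reflexivity. Qed.

Lemma qpoch_add (x q : C) (j k : nat) :
  qpoch x q (j + k) = qpoch x q j * qpoch (x * q ^ j) q k.
Proof.
  induction k as [|k IH]; [rewrite Nat.add_0_r; simpl; ring|].
  rewrite Nat.add_succ_r, !qpochS, IH, Cpow_add_r. ring.
Qed.

Lemma qpoch_1 (x q : C) : qpoch x q 1 = 1 - x.
Proof. rewrite qpochS. simpl. ring. Qed.

Lemma qpochS_l (x q : C) (k : nat) : qpoch x q (S k) = (1 - x) * qpoch (x * q) q k.
Proof. rewrite <- Nat.add_1_l, qpoch_add, Cpow_1_r, qpochS. simpl. ring. Qed.

Lemma qpoch_0_l (q : C) (k : nat) : qpoch 0 q k = 1.
Proof. induction k as [|k IH]; [reflexivity|]. rewrite qpochS, IH. ring. Qed.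

Lemma qpoch_factor_neq0 (x q : C) (k i : nat) :
  qpoch x q k <> 0 -> (i < k)%nat -> 1 - x * q ^ i <> 0.
Proof.
  induction k as [|k IH]; intros H Hi E; [lia|]. rewrite qpochS in H.
  destruct (Nat.eq_dec i k) as [->|Hne]; [apply H; rewrite E; ring|].
  apply IH; [intros E'; apply H; rewrite E'; ring | lia | exact E].
Qed.

Lemma qpoch_neq0 (x q : C) (k : nat) :
  (forall i, (i < k)%nat -> 1 - x * q ^ i <> 0) -> qpoch x q k <> 0.
Proof.
  induction k as [|k IH]; intros H; [apply C1_neq_0|].
  rewrite qpochS. apply Cmult_neq_0; [apply IH; intros; apply H|apply H]; lia.
Qed.

Lemma qpoch_eq0 (x q : C) (n i : nat) : (i < n)%nat -> 1 - x * q ^ i = 0 -> qpoch x q n = 0.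
Proof.
  intros Hi E. induction n as [|n IH]; [lia|]. rewrite qpochS.
  destruct (Nat.eq_dec i n) as [->|Hne]; [rewrite E|rewrite IH by lia]; ring.
Qed.

Lemma qpoch_shift_neq0 (x q : C) (n k : nat) : qpoch x q (n + k) <> 0 -> qpoch (x * q ^ n) q k <> 0.
Proof. intros H E. apply H. rewrite qpoch_add, E. ring. Qed.

Lemma is_lim_Cseq_qpoch_shift (x q P : C) (j : nat) :
  is_lim_Cseq (qpoch (x * q ^ j) q) P -> is_lim_Cseq (qpoch x q) (qpoch x q j * P).
Proof.
  intros H. apply (is_lim_Cseq_incr_n _ _ j).
  eapply is_lim_Cseq_ext; [|exact (is_lim_Cseq_mult _ _ _ _ (is_lim_Cseq_const (qpoch x q j)) H)].
  intros n. now rewrite Nat.add_comm, qpoch_add.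
Qed.

Lemma is_lim_Cseq_qpoch_unshift (x q P : C) (j : nat) :
  qpoch x q j <> 0 -> is_lim_Cseq (qpoch x q) P -> is_lim_Cseq (qpoch (x * q ^ j) q) (P / qpoch x q j).
Proof.
  intros Hj H. apply (is_lim_Cseq_incr_n _ _ j) in H.
  eapply is_lim_Cseq_ext; [|exact (is_lim_Cseq_mult _ _ _ _ H (is_lim_Cseq_const (/ qpoch x q j)))].
  intros n. simpl. rewrite Nat.add_comm, qpoch_add. field. exact Hj.
Qed.

Definition phi21_term (a b c q z : C) (l : nat) : C :=
  qpoch a q l * qpoch b q l / (qpoch q q l * qpoch c q l) * z ^ l.

Section SmallBase.
Variable q : C.
Hypothesis Hq : (0 < Cmod q < 1)%R.

Lemma q_neq0 : q <> 0.
Proof. intros E. rewrite E, Cmod_0 in Hq. lra. Qed.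

Lemma qpow_neq0 (n : nat) : q ^ n <> 0.
Proof. apply Cpow_nz, q_neq0. Qed.

Lemma one_minus_qpowS_neq0 (n : nat) : 1 - q * q ^ n <> 0.
Proof.
  apply one_minus_neq0. rewrite <- Cpow_S, Cmod_pow.
  apply pow_lt_1_compat; [split; [apply Cmod_ge_0|lra] | lia].
Qed.

Lemma one_minus_inv_qpowS_neq0 (n : nat) : 1 - / q ^ S n <> 0.
Proof.
  replace (1 - / q ^ S n) with (- (1 - q * q ^ n) / q ^ S n) by (rewrite Cpow_S; field; split;
    [apply qpow_neq0|apply q_neq0]).
  intros E. apply (one_minus_qpowS_neq0 n).
  replace (1 - q * q ^ n) with (- (- (1 - q * q ^ n) / q ^ S n) * q ^ S n) by (field; apply qpow_neq0).
  rewrite E. ring.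
Qed.

Lemma qpoch_qq_neq0 (l : nat) : qpoch q q l <> 0.
Proof. apply qpoch_neq0. intros i _. apply one_minus_qpowS_neq0. Qed.

Lemma qpoch_inv_qpow_neq0 (j : nat) : qpoch (/ q ^ j) q j <> 0.
Proof.
  apply qpoch_neq0. intros i Hi.
  replace (/ q ^ j * q ^ i) with (/ q ^ S (j - S i)).
  - apply one_minus_inv_qpowS_neq0.
  - assert (E : q ^ j = q ^ S (j - S i) * q ^ i) by (rewrite <- Cpow_add_r; f_equal; lia).
    rewrite E. field. split; apply qpow_neq0.
Qed.

Lemma qpoch_inv_qpow_eq0 (k j : nat) : (k < j)%nat -> qpoch (/ q ^ k) q j = 0.
Proof.
  intros Hk. apply (qpoch_eq0 _ _ _ k Hk). field. now apply qpow_neq0.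
Qed.

Lemma Cmod_mult_qpow_lt (x : C) (n : nat) : (Cmod x < 1)%R -> (Cmod (x * q ^ n) < 1)%R.
Proof.
  intros Hx. rewrite Cmod_mult, Cmod_pow.
  assert (0 <= Cmod q ^ n <= 1)%R by (apply pow_le_1; lra).
  assert (0 <= Cmod x)%R by apply Cmod_ge_0. nra.
Qed.

Lemma qpoch_small_neq0 (x : C) (n : nat) : (Cmod x < 1)%R -> qpoch x q n <> 0.
Proof. intros Hx. apply qpoch_neq0. intros i _. now apply one_minus_neq0, Cmod_mult_qpow_lt. Qed.

Lemma is_lim_Cseq_qpow : is_lim_Cseq (fun l => q ^ l) 0.
Proof.
  apply is_lim_Cseq_Cmod_0. eapply is_lim_seq_ext; [|apply (is_lim_seq_geom (Cmod q))].
  - intros n. now rewrite Cmod_pow.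
  - rewrite Rabs_pos_eq; lra.
Qed.

Lemma eventually_Cmod_mult_qpow_le (x : C) (eps : posreal) :
  eventually (fun n => Cmod (x * q ^ n) <= eps)%R.
Proof.
  assert (H := is_lim_Cseq_mult _ _ _ _ (is_lim_Cseq_const x) is_lim_Cseq_qpow).
  rewrite Cmult_0_r in H. apply is_lim_seq_spec in H. destruct (H eps) as [N HN].
  exists N. intros n Hn. specialize (HN n Hn). simpl in HN.
  rewrite Rminus_0_r, Rabs_pos_eq in HN by apply Cmod_ge_0.
  replace (x * q ^ n - 0) with (x * q ^ n) in HN by ring. lra.
Qed.

Lemma is_lim_Cseq_one_minus_qpow (x : C) : is_lim_Cseq (fun l => 1 - x * q ^ l) 1.
Proof.
  assert (H := is_lim_Cseq_plus _ _ _ _ (is_lim_Cseq_const 1)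
    (is_lim_Cseq_mult _ _ _ _ (is_lim_Cseq_const (- x)) is_lim_Cseq_qpow)).
  replace (1 + - x * 0) with (RtoC 1) in H by ring.
  eapply is_lim_Cseq_ext; [|exact H]. intros n. simpl. ring.
Qed.

Lemma qpoch_reflect (t : C) (j : nat) : t <> 0 ->
  t ^ j * qpoch (/ q ^ j) q j * qpoch (q / t) q j = qpoch q q j * qpoch (t / q ^ j) q j.
Proof.
  intros Ht. assert (Hq0 := q_neq0).
  assert (Hrev : forall x k, qpoch (x / q ^ S k) q (S k) = (1 - x / q ^ S k) * qpoch (x / q ^ k) q k).
  { intros x k. rewrite qpochS_l. f_equal. f_equal. rewrite Cpow_S. field. split; auto. apply qpow_neq0. }
  induction j as [|j IH]; [simpl; ring|].
  replace (/ q ^ S j) with (1 / q ^ S j) by (field; apply qpow_neq0).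
  rewrite !Hrev, !qpochS. replace (1 / q ^ j) with (/ q ^ j) by (field; apply qpow_neq0).
  transitivity ((t ^ j * qpoch (/ q ^ j) q j * qpoch (q / t) q j)
    * (t * (1 - 1 / q ^ S j) * (1 - q / t * q ^ j))); [rewrite Cpow_S; unfold Cdiv; ring|].
  rewrite IH, Cpow_S. assert (q ^ j <> 0) by apply qpow_neq0. field. auto.
Qed.

Lemma qpoch_inv_qpow_shift (j l : nat) :
  qpoch (/ q ^ (l + j)) q j * qpoch q q l * (q ^ j) ^ l
  = qpoch q q (l + j) * qpoch (/ q ^ j) q j / qpoch q q j.
Proof.
  assert (Hl : q ^ l <> 0) by apply qpow_neq0. assert (Hj : q ^ j <> 0) by apply qpow_neq0.
  assert (E := qpoch_reflect (/ q ^ l) j (Cinv_neq0 _ Hl)).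
  replace (/ q ^ l / q ^ j) with (/ q ^ (l + j)) in E by (rewrite Cpow_add_r; field; auto).
  replace (q / / q ^ l) with (q * q ^ l) in E by (field; auto).
  rewrite qpoch_add, <- Cpow_mult_r, Nat.mul_comm, Cpow_mult_r.
  assert (Hqj := qpoch_qq_neq0 j). assert (Hql := qpoch_qq_neq0 l).
  assert (Hlj : (q ^ l) ^ j <> 0) by now apply Cpow_nz.
  rewrite Cpow_inv in E by exact Hl.
  replace (qpoch (/ q ^ (l + j)) q j)
    with (/ (q ^ l) ^ j * qpoch (/ q ^ j) q j * qpoch (q * q ^ l) q j / qpoch q q j)
    by (rewrite E; field; auto).
  field. auto.
Qed.

Lemma phi21_termS (a b c z : C) (l : nat) : qpoch c q (S l) <> 0 ->
  phi21_term a b c q z (S l)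
  = (1 - a * q ^ l) * (1 - b * q ^ l) / ((1 - q * q ^ l) * (1 - c * q ^ l)) * z
    * phi21_term a b c q z l.
Proof.
  intros Hc. unfold phi21_term. rewrite !qpochS, Cpow_S in *.
  assert (qpoch q q l <> 0) by now apply qpoch_qq_neq0.
  assert (1 - q * q ^ l <> 0) by now apply one_minus_qpowS_neq0.
  assert (qpoch c q l <> 0) by (intros E; apply Hc; rewrite E; ring).
  assert (1 - c * q ^ l <> 0) by (intros E; apply Hc; rewrite E; ring).
  field. auto.
Qed.

Lemma ex_series_phi21_term (a b c z : C) :
  (Cmod z < 1)%R -> (forall k, qpoch c q k <> 0) ->
  ex_series (fun n => Cmod (phi21_term a b c q z n)).
Proof.
  intros Hz Hc.
  assert (Hden : forall n, (1 - q * q ^ n) * (1 - c * q ^ n) <> 0).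
  { intros n. apply Cmult_neq_0; [now apply one_minus_qpowS_neq0|].
    apply (qpoch_factor_neq0 c q (S n)); [apply Hc|lia]. }
  apply ex_series_Cmod_ratio with
    (fun l => (1 - a * q ^ l) * (1 - b * q ^ l) / ((1 - q * q ^ l) * (1 - c * q ^ l)) * z) z.
  - exact Hz.
  - assert (H := is_lim_Cseq_mult _ _ _ _ (is_lim_Cseq_mult _ _ _ _
      (is_lim_Cseq_mult _ _ _ _ (is_lim_Cseq_one_minus_qpow a) (is_lim_Cseq_one_minus_qpow b))
      (is_lim_Cseq_inv _ _ (Cmult_neq_0 _ _ C1_neq_0 C1_neq_0) Hden
        (is_lim_Cseq_mult _ _ _ _ (is_lim_Cseq_one_minus_qpow q) (is_lim_Cseq_one_minus_qpow c))))
      (is_lim_Cseq_const z)).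
    replace (1 * 1 * / (1 * 1) * z) with z in H by (field; apply C1_neq_0). exact H.
  - intros l. apply phi21_termS, Hc.
Qed.

Lemma qpoch_Cmod_ge (x : C) (l : nat) :
  (1 - Cmod x * (1 - Cmod q ^ l) / (1 - Cmod q) <= Cmod (qpoch x q l))%R.
Proof.
  set (r := Cmod q). assert (Hr : (0 < r < 1)%R) by (unfold r; lra).
  assert (Hx : (0 <= Cmod x)%R) by apply Cmod_ge_0.
  induction l as [|l IH].
  - simpl. rewrite Cmod_1. unfold Rdiv. rewrite Rminus_eq_0, Rmult_0_r, Rmult_0_l. lra.
  - rewrite qpochS, Cmod_mult.
    assert (F : (1 - Cmod x * r ^ l <= Cmod (1 - x * q ^ l))%R).
    { assert (T := Cmod_triangle_inv 1 (x * q ^ l)). now rewrite Cmod_1, Cmod_mult, Cmod_pow in T. }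
    replace (1 - Cmod x * (1 - r ^ S l) / (1 - r))%R
      with ((1 - Cmod x * (1 - r ^ l) / (1 - r)) - Cmod x * r ^ l)%R by (simpl; field; lra).
    set (A := (1 - Cmod x * (1 - r ^ l) / (1 - r))%R) in *.
    assert (HA : (A <= 1)%R).
    { assert (0 <= r ^ l <= 1)%R by (apply pow_le_1; lra).
      assert (0 <= Cmod x * (1 - r ^ l) / (1 - r))%R; [|unfold A; lra].
      apply Rmult_le_pos; [apply Rmult_le_pos|left; apply Rinv_0_lt_compat]; lra. }
    assert (Hp : (0 <= Cmod x * r ^ l)%R) by (apply Rmult_le_pos; [lra|apply pow_le; lra]).
    assert (0 <= Cmod (qpoch x q l) * Cmod (1 - x * q ^ l))%R by (apply Rmult_le_pos; apply Cmod_ge_0).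
    destruct (Rle_lt_dec A 0); [lra|]. destruct (Rle_lt_dec (1 - Cmod x * r ^ l) 0); [lra|].
    apply Rle_trans with (A * (1 - Cmod x * r ^ l))%R; [nra|].
    apply Rmult_le_compat; lra.
Qed.

Lemma qpoch_Cmod_ge_half (x : C) (l : nat) :
  (Cmod x <= (1 - Cmod q) / 2)%R -> (/ 2 <= Cmod (qpoch x q l))%R.
Proof.
  intros H. eapply Rle_trans; [|apply qpoch_Cmod_ge].
  assert (0 <= Cmod q ^ l <= 1)%R by (apply pow_le_1; split; [apply Cmod_ge_0|lra]).
  assert (0 <= Cmod x)%R by apply Cmod_ge_0.
  assert (Cmod x * (1 - Cmod q ^ l) / (1 - Cmod q) <= / 2)%R; [|lra].
  apply Rmult_le_reg_r with (1 - Cmod q)%R; [lra|].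
  unfold Rdiv. rewrite Rmult_assoc, Rinv_l by lra. nra.
Qed.
End SmallBase.

(** * The q-Gauss sum *)

Section QGauss.
Variables q a b : C.
Hypothesis Hq : (0 < Cmod q < 1)%R.
Hypothesis Ha : a <> 0.
Hypothesis Hb : b <> 0.

Definition gauss_term (c : C) : nat -> C := phi21_term a b c q (c / (a * b)).

Definition gauss_factor (c : C) : C := (1 - c / a) * (1 - c / b) / ((1 - c) * (1 - c / (a * b))).

Definition gauss_ratio (c : C) (n : nat) : C :=
  qpoch (c / a) q n * qpoch (c / b) q n / (qpoch c q n * qpoch (c / (a * b)) q n).

(* The contiguous relation in [c -> c q], written so that its series form telescopes. *)
Lemma gauss_term_contiguous (c : C) (l : nat) :
  (forall k, qpoch c q k <> 0) -> (Cmod (c / (a * b)) < 1)%R ->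
  let D := fun l => gauss_term c l * (1 - q ^ l) / (1 - c / (a * b)) in
  gauss_term c l = gauss_factor c * gauss_term (c * q) l + (D l - D (S l)).
Proof.
  intros Hc Hz D. unfold D, gauss_term, gauss_factor. rewrite phi21_termS by auto.
  unfold phi21_term. rewrite Cpow_S.
  assert (Hc1 : 1 - c <> 0) by (rewrite <- (qpoch_1 c q); apply Hc).
  assert (Hcq : qpoch (c * q) q l = qpoch c q l * (1 - c * q ^ l) / (1 - c)).
  { rewrite <- qpochS, qpochS_l. field. exact Hc1. }
  rewrite Hcq. replace (c * q / (a * b)) with (c / (a * b) * q) by (field; auto).
  rewrite Cpow_mult_l.
  assert (qpoch q q l <> 0) by now apply qpoch_qq_neq0.
  assert (1 - q * q ^ l <> 0) by now apply one_minus_qpowS_neq0.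
  assert (qpoch c q l <> 0) by apply Hc.
  assert (1 - c * q ^ l <> 0) by (apply (qpoch_factor_neq0 c q (S l)); [apply Hc|lia]).
  assert (Hz1 : 1 - c / (a * b) <> 0) by now apply one_minus_neq0.
  assert (a * b - c <> 0) by (apply sub_neq0_of_one_minus_div; auto; now apply Cmult_neq_0).
  field. repeat split; auto.
Qed.

Lemma gauss_contiguous (c s : C) :
  (forall k, qpoch c q k <> 0) -> (Cmod (c / (a * b)) < 1)%R ->
  is_Cseries (gauss_term (c * q)) s -> is_Cseries (gauss_term c) (gauss_factor c * s).
Proof.
  intros Hc Hz HS. set (D := fun l => gauss_term c l * (1 - q ^ l) / (1 - c / (a * b))).
  assert (HD : is_lim_Cseq D 0).
  { assert (H := is_lim_Cseq_mult _ _ _ _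
      (is_lim_Cseq_term_0 _ (ex_series_phi21_term q Hq a b c _ Hz Hc))
      (is_lim_Cseq_one_minus_qpow q Hq 1)).
    assert (H' := is_lim_Cseq_mult _ _ _ _ H (is_lim_Cseq_const (/ (1 - c / (a * b))))).
    rewrite !Cmult_0_l in H'. eapply is_lim_Cseq_ext; [|exact H'].
    intros l. unfold D, gauss_term, Cdiv. ring. }
  assert (H := is_Cseries_plus _ _ _ _ (is_Cseries_scal _ _ (gauss_factor c) HS)
    (is_Cseries_telescope D HD)).
  replace (D O) with (RtoC 0) in H by (unfold D; simpl; unfold Cdiv; ring).
  rewrite Cplus_0_r in H. eapply is_Cseries_ext; [|exact H].
  intros l. symmetry. now apply gauss_term_contiguous.
Qed.

Lemma gauss_ratioS (c : C) (n : nat) :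
  qpoch c q (S n) <> 0 -> qpoch (c / (a * b)) q (S n) <> 0 ->
  gauss_ratio c (S n) = gauss_ratio c n * gauss_factor (c * q ^ n).
Proof.
  intros Hc Hw. unfold gauss_ratio, gauss_factor. rewrite !qpochS in *.
  assert (qpoch c q n <> 0) by (intros E; apply Hc; rewrite E; ring).
  assert (1 - c * q ^ n <> 0) by (intros E; apply Hc; rewrite E; ring).
  assert (qpoch (c / (a * b)) q n <> 0) by (intros E; apply Hw; rewrite E; ring).
  assert (1 - c / (a * b) * q ^ n <> 0) by (intros E; apply Hw; rewrite E; ring).
  replace (c * q ^ n / (a * b)) with (c / (a * b) * q ^ n) by (field; auto).
  replace (c * q ^ n / a) with (c / a * q ^ n) by (field; auto).
  replace (c * q ^ n / b) with (c / b * q ^ n) by (field; auto).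
  assert (a * b - c * q ^ n <> 0).
  { apply sub_neq0_of_one_minus_div; [now apply Cmult_neq_0|].
    replace (c * q ^ n / (a * b)) with (c / (a * b) * q ^ n) by (field; auto). auto. }
  field. repeat split; auto.
Qed.

Lemma gauss_iterate (c : C) :
  (forall k, qpoch c q k <> 0) -> (Cmod (c / (a * b)) < 1)%R ->
  forall n s, is_Cseries (gauss_term (c * q ^ n)) s -> is_Cseries (gauss_term c) (gauss_ratio c n * s).
Proof.
  intros Hc Hz. induction n as [|n IH]; intros s HS.
  - replace (c * q ^ 0) with c in HS by (simpl; ring). unfold gauss_ratio. simpl.
    replace (1 * 1 / (1 * 1) * s) with s by (field; apply C1_neq_0). exact HS.
  - replace (c * q ^ S n) with (c * q ^ n * q) in HS by (rewrite Cpow_S; ring).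
    apply gauss_contiguous in HS.
    + apply IH in HS. rewrite gauss_ratioS by (apply Hc || now apply qpoch_small_neq0).
      now rewrite <- Cmult_assoc.
    + intros k. apply qpoch_shift_neq0, Hc.
    + replace (c * q ^ n / (a * b)) with (c / (a * b) * q ^ n) by (field; auto).
      now apply Cmod_mult_qpow_lt.
Qed.

Lemma phi21_term_Cmod_le (x w t : C) (l : nat) :
  (Cmod x <= (1 - Cmod q) / 2)%R -> (Cmod t <= 1)%R -> (1 <= l)%nat ->
  (Cmod (phi21_term a b x q (w * t) l) <= 2 * Cmod t * Cmod (phi21_term a b 0 q w l))%R.
Proof.
  intros Hx Ht Hl. assert (Hhalf := qpoch_Cmod_ge_half q Hq x l Hx).
  assert (Hx0 : qpoch x q l <> 0) by (intros E; rewrite E, Cmod_0 in Hhalf; lra).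
  assert (E : phi21_term a b x q (w * t) l = phi21_term a b 0 q w l * t ^ l / qpoch x q l).
  { unfold phi21_term. rewrite qpoch_0_l, Cpow_mult_l.
    assert (qpoch q q l <> 0) by now apply qpoch_qq_neq0. field. auto. }
  assert (Htl : (Cmod t ^ l <= Cmod t)%R).
  { destruct l as [|l]; [lia|]. simpl. assert (0 <= Cmod t)%R by apply Cmod_ge_0.
    assert (Cmod t ^ l <= 1)%R by (apply pow_le_1; lra). nra. }
  assert (Hinv : (/ Cmod (qpoch x q l) <= 2)%R).
  { rewrite <- (Rinv_inv 2). apply Rinv_le_contravar; lra. }
  rewrite E, Cmod_div, Cmod_mult, Cmod_pow by exact Hx0. unfold Rdiv.
  assert (0 <= Cmod (phi21_term a b 0 q w l))%R by apply Cmod_ge_0.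
  assert (0 <= Cmod t ^ l)%R by (apply pow_le, Cmod_ge_0).
  assert (0 <= / Cmod (qpoch x q l))%R by (left; apply Rinv_0_lt_compat; lra).
  apply Rle_trans with (Cmod (phi21_term a b 0 q w l) * Cmod t * 2)%R; [|lra].
  apply Rmult_le_compat; try apply Rmult_le_compat_l; auto. now apply Rmult_le_pos.
Qed.

Lemma phi21_sum_near_one (x w t s : C) (M : R) :
  (Cmod x <= (1 - Cmod q) / 2)%R -> (Cmod t <= 1)%R ->
  is_series (fun l => Cmod (phi21_term a b 0 q w l)) M ->
  is_Cseries (phi21_term a b x q (w * t)) s -> (Cmod (s - 1) <= 2 * Cmod t * M)%R.
Proof.
  intros Hx Ht HM Hs.
  set (delta := fun l : nat => match l with O => RtoC 1 | S _ => RtoC 0 end).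
  assert (Hd : is_Cseries delta 1).
  { assert (T := is_Cseries_finite delta 1). simpl in T. rewrite Cplus_0_l in T.
    apply T. intros [|k] Hk; [lia|reflexivity]. }
  assert (H := is_Cseries_plus _ _ _ _ Hs (is_Cseries_scal _ _ (-1) Hd)).
  replace (s + -1 * 1) with (s - 1) in H by ring.
  apply (is_Cseries_Cmod_le _ _ (fun l => 2 * Cmod t * Cmod (phi21_term a b 0 q w l))%R _ H).
  - intros [|l]; unfold delta.
    + unfold phi21_term. simpl. replace (1 * 1 / (1 * 1) * 1 + -1 * 1) with (RtoC 0)
        by (field; apply C1_neq_0).
      rewrite Cmod_0. apply Rmult_le_pos; [|apply Cmod_ge_0].
      generalize (Cmod_ge_0 t). lra.
    + rewrite Cmult_0_r, Cplus_0_r. apply phi21_term_Cmod_le; auto. lia.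
  - now apply (@is_series_scal_l R_AbsRing R_NormedModule).
Qed.

Theorem q_gauss (c P : C) :
  (forall k, qpoch c q k <> 0) -> (Cmod (c / (a * b)) < 1)%R ->
  is_lim_Cseq (gauss_ratio c) P -> is_Cseries (gauss_term c) P.
Proof.
  intros Hc Hz HP. set (w := c / (a * b)).
  destruct (ex_Cseries_Cmod _ (ex_series_phi21_term q Hq a b c w Hz Hc)) as [L HL].
  assert (H0 : forall k, qpoch 0 q k <> 0) by (intros k; rewrite qpoch_0_l; apply C1_neq_0).
  destruct (ex_series_phi21_term q Hq a b 0 w Hz H0) as [M HM].
  (* [L = gauss_ratio c n * s_n] where the tail sum [s_n] is [1 + O(|q|^n)] *)
  assert (He : (0 < (1 - Cmod q) / 2)%R) by lra.
  assert (Hclose : eventually (fun n =>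
    Cmod (gauss_ratio c n - L) <= Cmod (gauss_ratio c n) * (2 * Cmod q ^ n * M))%R).
  { destruct (eventually_Cmod_mult_qpow_le q Hq c (mkposreal _ He)) as [N HN].
    exists N. intros n Hn. specialize (HN n Hn). simpl in HN.
    assert (Ew : c * q ^ n / (a * b) = w * q ^ n) by (unfold w; field; auto).
    assert (Hzn : (Cmod (c * q ^ n / (a * b)) < 1)%R) by (rewrite Ew; now apply Cmod_mult_qpow_lt).
    destruct (ex_Cseries_Cmod _ (ex_series_phi21_term q Hq a b (c * q ^ n) _ Hzn
      (fun k => qpoch_shift_neq0 c q n k (Hc (n + k)%nat)))) as [s Hs].
    rewrite (is_Cseries_unique _ _ _ HL (gauss_iterate c Hc Hz n s Hs)).
    replace (gauss_ratio c n - gauss_ratio c n * s) with (- gauss_ratio c n * (s - 1)) by ring.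
    rewrite Cmod_mult, Cmod_opp, <- Cmod_pow. apply Rmult_le_compat_l; [apply Cmod_ge_0|].
    unfold gauss_term in Hs. rewrite Ew in Hs.
    apply (phi21_sum_near_one (c * q ^ n) w); auto.
    rewrite Cmod_pow. apply pow_le_1. lra. }
  assert (HL' : is_lim_Cseq (gauss_ratio c) L).
  { apply (is_lim_Cseq_squeeze _ _ _ Hclose).
    replace 0%R with (Cmod P * (2 * 0 * M))%R by ring.
    apply is_lim_seq_mult'; [now apply is_lim_Cseq_Cmod|].
    apply is_lim_seq_mult'; [|apply is_lim_seq_const].
    apply is_lim_seq_mult'; [apply is_lim_seq_const|].
    apply is_lim_seq_geom. rewrite Rabs_pos_eq; lra. }
  rewrite (is_lim_Cseq_unique _ _ _ HP HL'). exact HL.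
Qed.
End QGauss.

(** * The q-Chu–Vandermonde sum *)

Section ChuVandermonde.
Variables q d : C.
Hypothesis Hq : (0 < Cmod q < 1)%R.
Hypothesis Hd : forall j, qpoch d q j <> 0.

Definition chu_coef (m j : nat) : C :=
  qpoch (/ q ^ m) q j * q ^ j / (qpoch q q j * qpoch d q j).

Lemma chu_coef_out m : chu_coef m (S m) = 0.
Proof.
  unfold chu_coef. rewrite (qpoch_eq0 _ _ _ m); [unfold Cdiv; ring|lia|].
  field. now apply qpow_neq0.
Qed.

Lemma qpoch_inv_qpowS (m j : nat) :
  qpoch (/ q ^ S m) q (S j) = (1 - / q ^ S m) * qpoch (/ q ^ m) q j.
Proof.
  rewrite qpochS_l. do 2 f_equal. rewrite Cpow_S. field.
  split; [now apply qpow_neq0|now apply q_neq0].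
Qed.

Lemma chu_partial_sum_step (m n : nat) (x : C) : x <> 0 ->
  psum (fun j => chu_coef m j * x ^ m * qpoch (/ x) q j * (1 - d * q ^ m * x)) (S n)
  = (1 - d * q ^ m) * psum (fun j => chu_coef (S m) j * x ^ S m * qpoch (/ x) q j) (S n)
    - chu_coef m n / q ^ n * (x ^ S m * qpoch (/ x) q (S n)).
Proof.
  intros Hx. assert (q <> 0) by now apply q_neq0.
  assert (Hm : q ^ m <> 0) by now apply qpow_neq0.
  induction n as [|n IH].
  - cbn [psum]. unfold chu_coef. rewrite qpoch_1. cbn [qpoch Cpow].
    field. repeat split; auto; apply C1_neq_0.
  - rewrite !(psum_S_n _ (S n)), IH.
    unfold chu_coef. rewrite qpoch_inv_qpowS, !qpochS, !Cpow_S.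
    assert (qpoch q q n <> 0) by now apply qpoch_qq_neq0.
    assert (qpoch d q n <> 0) by apply Hd.
    assert (1 - q * q ^ n <> 0) by now apply one_minus_qpowS_neq0.
    assert (1 - d * q ^ n <> 0) by (apply (qpoch_factor_neq0 d q (S n)); [apply Hd|lia]).
    assert (q ^ n <> 0) by now apply qpow_neq0.
    field. repeat split; auto.
Qed.

Lemma qpoch_ratio_expansion (m : nat) (x : C) : x <> 0 ->
  qpoch (d * x) q m / qpoch d q m = psum (fun j => chu_coef m j * x ^ m * qpoch (/ x) q j) (S m).
Proof.
  intros Hx. induction m as [|m IH].
  - cbn [psum]. unfold chu_coef. cbn [qpoch Cpow]. field; apply C1_neq_0.
  - assert (H1 : 1 - d * q ^ m <> 0) by (apply (qpoch_factor_neq0 d q (S m)); [apply Hd|lia]).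
    assert (H2 : qpoch d q m <> 0) by apply Hd.
    transitivity (qpoch (d * x) q m / qpoch d q m * (1 - d * q ^ m * x) / (1 - d * q ^ m)).
    { rewrite !qpochS. field. split; auto. }
    rewrite IH, <- psum_mult_r.
    assert (E := chu_partial_sum_step m (S m) x Hx).
    rewrite (psum_S_n _ (S m)), chu_coef_out in E.
    lazymatch type of E with ?A + ?B = ?C - ?D =>
      assert (E' : A = C) by (transitivity (A + B); [ring|rewrite E; unfold Cdiv; ring]) end.
    rewrite E'.
    field. exact H1.
Qed.
End ChuVandermonde.

Section Transformation.
Variables q a b c d : C.
Variable m : nat.
Variables Pca Pcb Pc Pcab : C.
Hypothesis Hq : (0 < Cmod q < 1)%R.
Hypothesis Ha : a <> 0.
Hypothesis Hb : b <> 0.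
Hypothesis Hc0 : c <> 0.
Hypothesis Hc : forall k, qpoch c q k <> 0.
Hypothesis Hd : forall k, qpoch d q k <> 0.
Hypothesis Habq : forall k, (k <= m)%nat -> qpoch (a * b * q / c) q k <> 0.
Hypothesis Hz : (Cmod (c / (a * b) / q ^ m) < 1)%R.
Hypothesis HPca : is_lim_Cseq (qpoch (c / a) q) Pca.
Hypothesis HPcb : is_lim_Cseq (qpoch (c / b) q) Pcb.
Hypothesis HPc : is_lim_Cseq (qpoch c q) Pc.
Hypothesis HPcab : is_lim_Cseq (qpoch (c / (a * b)) q) Pcab.
Hypothesis HPc0 : Pc <> 0.
Hypothesis HPcab0 : Pcab <> 0.

Let w := c / (a * b).
Let P := Pca * Pcb / (Pc * Pcab).

Lemma w_neq0 : w <> 0.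
Proof. unfold w. apply Cmult_neq_0; [exact Hc0|apply Cinv_neq0, Cmult_neq_0; auto]. Qed.

Lemma Cmod_w_div_qpow_lt (j : nat) : (j <= m)%nat -> (Cmod (w / q ^ j) < 1)%R.
Proof.
  intros Hj. eapply Rle_lt_trans; [|exact Hz]. fold w.
  assert (Hqj : q ^ j <> 0) by now apply qpow_neq0.
  assert (Hqm : q ^ m <> 0) by now apply qpow_neq0.
  rewrite !Cmod_div, !Cmod_pow by auto.
  assert (0 <= Cmod w)%R by apply Cmod_ge_0.
  assert (0 < Cmod q ^ m)%R by (apply pow_lt; lra).
  assert (Cmod q ^ m <= Cmod q ^ j)%R.
  { replace m with (j + (m - j))%nat by lia. rewrite pow_add.
    assert (0 <= Cmod q ^ (m - j) <= 1)%R by (apply pow_le_1; lra).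
    assert (0 <= Cmod q ^ j)%R by (apply pow_le, Cmod_ge_0). nra. }
  unfold Rdiv. apply Rmult_le_compat_l; [auto|]. now apply Rinv_le_contravar.
Qed.

Lemma is_lim_gauss_ratio_shift (j : nat) : (j <= m)%nat ->
  is_lim_Cseq (gauss_ratio q (a * q ^ j) (b * q ^ j) (c * q ^ j))
    (P * qpoch c q j / qpoch (w / q ^ j) q j).
Proof.
  intros Hj. assert (Hqj : q ^ j <> 0) by now apply qpow_neq0.
  assert (Hw := Cmod_w_div_qpow_lt j Hj).
  assert (Hwj : forall n, qpoch (w / q ^ j) q n <> 0) by (intros n; now apply qpoch_small_neq0).
  assert (Hcs := is_lim_Cseq_qpoch_unshift c q Pc j (Hc j) HPc).
  assert (Hws : is_lim_Cseq (qpoch (w / q ^ j) q) (qpoch (w / q ^ j) q j * Pcab)).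
  { apply is_lim_Cseq_qpoch_shift. replace (w / q ^ j * q ^ j) with w by (field; auto). exact HPcab. }
  assert (Hpc : Pc / qpoch c q j <> 0) by (apply Cmult_neq_0; [|apply Cinv_neq0, Hc]; auto).
  assert (H := is_lim_Cseq_mult _ _ _ _ (is_lim_Cseq_mult _ _ _ _ HPca HPcb)
    (is_lim_Cseq_inv _ _ (Cmult_neq_0 _ _ Hpc (Cmult_neq_0 _ _ (Hwj j) HPcab0))
      (fun n => Cmult_neq_0 _ _ (qpoch_shift_neq0 c q j n (Hc _)) (Hwj n))
      (is_lim_Cseq_mult _ _ _ _ Hcs Hws))).
  unfold gauss_ratio.
  replace (c * q ^ j / (a * q ^ j * (b * q ^ j))) with (w / q ^ j) by (unfold w; field; auto).
  replace (c * q ^ j / (a * q ^ j)) with (c / a) by (field; auto).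
  replace (c * q ^ j / (b * q ^ j)) with (c / b) by (field; auto).
  replace (P * qpoch c q j / qpoch (w / q ^ j) q j)
    with (Pca * Pcb * / (Pc / qpoch c q j * (qpoch (w / q ^ j) q j * Pcab)))
    by (unfold P; field; repeat split; auto).
  exact H.
Qed.

Definition inner_coef (j : nat) : C :=
  qpoch a q j * qpoch b q j * w ^ j * qpoch (/ q ^ j) q j / (qpoch q q j * qpoch c q j).

Lemma phi21_term_shift (j l : nat) :
  phi21_term a b c q w (l + j) * qpoch (/ q ^ (l + j)) q j
  = inner_coef j * gauss_term q (a * q ^ j) (b * q ^ j) (c * q ^ j) l.
Proof.
  assert (Hqj : q ^ j <> 0) by now apply qpow_neq0.
  assert (Hqjl : (q ^ j) ^ l <> 0) by now apply Cpow_nz.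
  assert (Hql := qpoch_qq_neq0 q Hq l). assert (Hqj' := qpoch_qq_neq0 q Hq j).
  assert (Hqlj := qpoch_shift_neq0 q q j l (qpoch_qq_neq0 q Hq _)).
  assert (Hcj := Hc j). assert (Hcjl := qpoch_shift_neq0 c q j l (Hc _)).
  unfold gauss_term, phi21_term, inner_coef.
  replace (c * q ^ j / (a * q ^ j * (b * q ^ j))) with (w / q ^ j) by (unfold w; field; auto).
  replace (qpoch (/ q ^ (l + j)) q j) with
    (qpoch q q (l + j) * qpoch (/ q ^ j) q j / qpoch q q j / (qpoch q q l * (q ^ j) ^ l))
    by (rewrite <- (qpoch_inv_qpow_shift q Hq j l); field; auto).
  rewrite (Nat.add_comm l j), !qpoch_add.
  replace ((w / q ^ j) ^ l) with (w ^ l / (q ^ j) ^ l)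
    by (unfold Cdiv; rewrite Cpow_mult_l, Cpow_inv by auto; ring).
  rewrite Cpow_add_r. field. repeat split; auto.
Qed.

Definition inner_sum (j : nat) : C := inner_coef j * (P * qpoch c q j / qpoch (w / q ^ j) q j).

Lemma is_Cseries_inner (j : nat) : (j <= m)%nat ->
  is_Cseries (fun k => phi21_term a b c q w k * qpoch (/ q ^ k) q j) (inner_sum j).
Proof.
  intros Hj. assert (Hqj : q ^ j <> 0) by now apply qpow_neq0.
  apply is_Cseries_incr_n with (fun l => inner_coef j * gauss_term q (a * q ^ j) (b * q ^ j) (c * q ^ j) l) j.
  - intros k Hk. rewrite (qpoch_inv_qpow_eq0 q Hq k j Hk). ring.
  - intros l. apply phi21_term_shift.
  - apply is_Cseries_scal, q_gauss.
    + exact Hq.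
    + now apply Cmult_neq_0.
    + now apply Cmult_neq_0.
    + intros k. apply qpoch_shift_neq0, Hc.
    + replace (c * q ^ j / (a * q ^ j * (b * q ^ j))) with (w / q ^ j) by (unfold w; field; auto).
      now apply Cmod_w_div_qpow_lt.
    + now apply is_lim_gauss_ratio_shift.
Qed.

Lemma chu_coef_inner_sum (j : nat) : (j <= m)%nat ->
  chu_coef q d m j * inner_sum j = P * phi32_term a b (/ q ^ m) (a * b * q / c) d q q j.
Proof.
  intros Hj. unfold inner_sum, inner_coef, chu_coef, phi32_term. change (pow_n q j) with (q ^ j).
  assert (E := qpoch_reflect q Hq w j w_neq0).
  replace (q / w) with (a * b * q / c) in E by (unfold w; field; auto).
  assert (Hqq := qpoch_qq_neq0 q Hq j).
  assert (Ewj : qpoch (w / q ^ j) q j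
    = w ^ j * qpoch (/ q ^ j) q j * qpoch (a * b * q / c) q j / qpoch q q j).
  { rewrite E. field. auto. }
  rewrite Ewj.
  assert (Habqj := Habq j Hj). assert (Hwj : w ^ j <> 0) by apply Cpow_nz, w_neq0.
  assert (Hinv := qpoch_inv_qpow_neq0 q Hq j). assert (Hcj := Hc j). assert (Hdj := Hd j).
  field. repeat split; auto.
Qed.

Lemma phi32_term_expand (k : nat) :
  phi32_term a b (d * q ^ m) c d q (w / q ^ m) k
  = psum (fun j => chu_coef q d m j * (phi21_term a b c q w k * qpoch (/ q ^ k) q j)) (S m).
Proof.
  assert (Hqk : q ^ k <> 0) by now apply qpow_neq0.
  assert (Hqm : q ^ m <> 0) by now apply qpow_neq0.
  assert (Hdk := Hd k). assert (Hdm := Hd m). assert (Hqq := qpoch_qq_neq0 q Hq k). assert (Hck := Hc k).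
  assert (Hswap : qpoch (d * q ^ m) q k / qpoch d q k = qpoch (d * q ^ k) q m / qpoch d q m).
  { transitivity (qpoch d q (m + k) / (qpoch d q k * qpoch d q m));
      [rewrite qpoch_add|rewrite Nat.add_comm, qpoch_add]; field; auto. }
  rewrite (qpoch_ratio_expansion q d Hq Hd m (q ^ k) Hqk) in Hswap.
  unfold phi32_term. change (pow_n (w / q ^ m) k) with ((w / q ^ m) ^ k).
  transitivity (phi21_term a b c q w k / (q ^ k) ^ m * (qpoch (d * q ^ m) q k / qpoch d q k)).
  - unfold phi21_term.
    replace ((w / q ^ m) ^ k) with (w ^ k / (q ^ k) ^ m)
      by (unfold Cdiv; rewrite Cpow_mult_l, Cpow_inv, <- !Cpow_mult_r, Nat.mul_comm; auto).
    assert ((q ^ k) ^ m <> 0) by now apply Cpow_nz. field. auto.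
  - rewrite Hswap, <- psum_mult_l. apply psum_ext. intros j _. field. now apply Cpow_nz.
Qed.

Lemma transformation (R : C) :
  is_Cseries (phi32_term a b (/ q ^ m) (a * b * q / c) d q q) R ->
  is_Cseries (phi32_term a b (d * q ^ m) c d q (w / q ^ m)) (P * R).
Proof.
  intros HR.
  assert (ER : R = psum (phi32_term a b (/ q ^ m) (a * b * q / c) d q q) (S m)).
  { apply (is_Cseries_unique _ _ _ HR), is_Cseries_finite. intros k Hk.
    unfold phi32_term. rewrite (qpoch_inv_qpow_eq0 q Hq m k) by lia. unfold Cdiv. ring. }
  replace (P * R) with (psum (fun j => chu_coef q d m j * inner_sum j) (S m)).
  - eapply is_Cseries_ext; [intros k; symmetry; apply phi32_term_expand|].
    apply is_Cseries_psum. intros j Hj. apply is_Cseries_scal, is_Cseries_inner. lia.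
  - rewrite ER, <- psum_mult_l. apply psum_ext. intros j Hj. apply chu_coef_inner_sum. lia.
Qed.
End Transformation.

Theorem lemma2p3 (q a b c d : C) (m : nat)
  (Pca Pcb Pc Pcab R : C) :
  (0 < Cmod q)%R -> (Cmod q < 1)%R ->
  a <> 0 -> b <> 0 -> c <> 0 ->
  (forall k : nat, qpoch c q k <> 0) ->
  (forall k : nat, qpoch d q k <> 0) ->
  (forall k : nat, (k <= m)%nat -> qpoch (a * b * q / c) q k <> 0) ->
  (Cmod (c * / pow_n q m / (a * b)) < 1)%R ->
  is_qpoch_inf (c / a) q Pca ->
  is_qpoch_inf (c / b) q Pcb ->
  is_qpoch_inf c q Pc ->
  is_qpoch_inf (c / (a * b)) q Pcab ->
  Pc <> 0 -> Pcab <> 0 ->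
  is_series (phi32_term a b (/ pow_n q m) (a * b * q / c) d q q) R ->
  is_series (phi32_term a b (d * pow_n q m) c d q (c * / pow_n q m / (a * b)))
            (Pca * Pcb / (Pc * Pcab) * R).
Proof.
  intros Hq0 Hq1 Ha Hb Hc0 Hc Hd Habq Hz HPca HPcb HPc HPcab HPc0 HPcab0 HR.
  change (pow_n q m) with (q ^ m) in *.
  assert (Hq : (0 < Cmod q < 1)%R) by (split; assumption).
  replace (c * / q ^ m / (a * b)) with (c / (a * b) / q ^ m) in *
    by (field; repeat split; auto; now apply qpow_neq0).
  unfold is_qpoch_inf in *. rewrite <- is_lim_Cseq_filterlim in HPca, HPcb, HPc, HPcab.
  apply is_Cseries_is_series. apply is_Cseries_is_series in HR.
  now apply (transformation q a b c d m Pca Pcb Pc Pcab).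
Qed.
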